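(* Let $\{\Theta_n\}_{n\ge0}$ be a family of lattice congruences on the weak orders $S_n$ that is both translational and insertional (an $\mathcal{H}$-family). Then the map $c$ embeds $(\mathbb{K}[Z^\Theta_\infty],\bullet_Z,\Delta_Z)$ as a sub Hopf algebra of the Malvenuto–Reutenauer Hopf algebra $(\mathbb{K}[S_\infty],\bullet_S,\Delta_S)$.
   Context: $S_n$: permutations of $[n]$ in one-line notation, with the right weak order (inclusion of sets of inverted value pairs), a lattice. $u\times v=u_1\cdots u_p(p+v_1)\cdots(p+v_q)$ for $u\in S_p,v\in S_q$. $\mathrm{st}(a_1,\dots,a_k)$ is the $u\in S_k$ with $u_i<u_j\iff a_i<a_j$. For $x\in S_{p+q}$, $x_{\bar p}:=u\times v$ with $u$ ($v$) the standardization of the subsequence of entries of $x$ in $[1,p]$ (in $[p+1,p+q]$). $\pi_\downarrow x$: minimum of the $\Theta_n$-class of $x$. Translational: $u\times v\equiv u'\times v'\pmod{\Theta_{p+q}}$ iff $u\equiv u'\pmod{\Theta_p}$ and $v\equiv v'\pmod{\Theta_q}$, for all $p,q$. Insertional: for every $p$-subset $Q\subseteq[p+q]$ and $\varphi_Q(u,v)$ the unique $x\in S_{p+q}$ with $\{x_1,..,x_p\}=Q$, $\mathrm{st}(x_1..x_p)=u$, $\mathrm{st}(x_{p+1}..x_{p+q})=v$: if $u\equiv u'$ mod $\Theta_p$ and $v\equiv v'$ mod $\Theta_q$ then $\varphi_Q(u,v)\equiv\varphi_Q(u',v')$ mod $\Theta_{p+q}$. $\mathbb{K}[S_\infty]=\bigoplus_n\mathbb{K}[S_n]$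 ($\mathbb{K}$ a field) with $u\bullet_S v=\sum_{x\in S_{p+q},x_{\bar p}=u\times v}x$ and $\Delta_S(x)=\sum_{p=0}^n\mathrm{st}(x_1..x_p)\otimes\mathrm{st}(x_{p+1}..x_n)$. $Z_n=\{x\in S_n:\pi_\downarrow x=x\}$, $\mathbb{K}[Z^\Theta_\infty]=\bigoplus_n\mathbb{K}[Z_n]$, $u\bullet_Z v=\sum_{x\in Z_{p+q},x_{\bar p}=u\times v}x$; $c$ maps $x\in Z_n$ to the sum of its class; $r$ fixes $x$ if $\pi_\downarrow x=x$ and kills it otherwise; $\Delta_Z=(r\otimes r)\circ\Delta_S\circ c$. *)

From HB Require Import structures.
From mathcomp Require Import all_boot all_order all_algebra.
Set Implicit Arguments. Unset Strict Implicit. Unset Printing Implicit Defensive.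
Import GRing.Theory.

(* Conventions: a permutation of [n] is represented by its one-line notation
   as a word (seq nat) with values 0..n-1 (i.e. the paper's values shifted
   down by one). *)
Definition S (n : nat) : seq (seq nat) := permutations (iota 0 n).

Definition inv (w : seq nat) : seq (nat * nat) :=
  [seq ab <- [seq (a, b) | a <- w, b <- w] | (ab.1 < ab.2) && (index ab.2 w < index ab.1 w)].

Definition weak_le (x y : seq nat) : bool := all (fun ab => ab \in inv y) (inv x).

Definition is_meet (n : nat) (m x y : seq nat) : Prop :=
  [/\ m \in S n, weak_le m x, weak_le m y &
      forall z, z \in S n -> weak_le z x -> weak_le z y -> weak_le z m].

Definition is_join (n : nat) (j x y : seq nat) : Prop :=
  [/\ j \in S n, weak_le x j, weak_le y j &
      forall z, z \in S n -> weak_le x z -> weak_le y z -> weak_le j z].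

Definition lattice_congruence (n : nat) (R : rel (seq nat)) : Prop :=
  [/\ (forall x, x \in S n -> R x x),
      (forall x y, x \in S n -> y \in S n -> R x y -> R y x),
      (forall x y z, x \in S n -> y \in S n -> z \in S n ->
                     R x y -> R y z -> R x z),
      (forall x y z m m', x \in S n -> y \in S n -> z \in S n ->
         R x y -> is_meet n m x z -> is_meet n m' y z -> R m m') &
      (forall x y z j j', x \in S n -> y \in S n -> z \in S n ->
         R x y -> is_join n j x z -> is_join n j' y z -> R j j')].

Definition st (s : seq nat) : seq nat := [seq count (fun b => b < a) s | a <- s].

Definition cross (u v : seq nat) : seq nat := u ++ [seq size u + b | b <- v].

Definition xbar (p : nat) (x : seq nat) : seq nat :=
  cross (st [seq a <- x | a < p]) (st [seq a <- x | p <= a]).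

Definition translational (Theta : nat -> rel (seq nat)) : Prop :=
  forall p q u u' v v', u \in S p -> u' \in S p -> v \in S q -> v' \in S q ->
    Theta (p + q) (cross u v) (cross u' v') <-> (Theta p u u' /\ Theta q v v').

Definition is_phi (p q : nat) (Q : seq nat) (u v x : seq nat) : bool :=
  [&& x \in S (p + q), perm_eq (take p x) Q,
      st (take p x) == u & st (drop p x) == v].

Definition insertional (Theta : nat -> rel (seq nat)) : Prop :=
  forall p q (Q : seq nat), uniq Q -> size Q = p -> all (fun a => a < p + q) Q ->
  forall u u' v v' x x', u \in S p -> u' \in S p -> v \in S q -> v' \in S q ->
    Theta p u u' -> Theta q v v' ->
    is_phi p q Q u v x -> is_phi p q Q u' v' x' -> Theta (p + q) x x'.

Definition H_family (Theta : nat -> rel (seq nat)) : Prop :=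
  (forall n, lattice_congruence n (Theta n)) /\ translational Theta /\ insertional Theta.

(* Z_n : minima of the classes (pi_down x = x) *)
Definition inZ (Theta : nat -> rel (seq nat)) (n : nat) (x : seq nat) : bool :=
  (x \in S n) && all (fun y => Theta n x y ==> weak_le x y) (S n).

Section Hopf.
Variables (K : fieldType) (Theta : nat -> rel (seq nat)).
Local Open Scope ring_scope.

(* Elements of K[S_infty] are coefficient functions seq nat -> K (supported on
   permutation words); elements of the tensor square are functions on pairs. *)

Definition prodS (u v : seq nat) : seq nat -> K :=
  fun x => ((x \in S (size u + size v)) && (xbar (size u) x == cross u v))%:R.
Definition prodZ (u v : seq nat) : seq nat -> K :=
  fun x => (inZ Theta (size u + size v) x && (xbar (size u) x == cross u v))%:R.

Definition coprodS (x : seq nat) : seq nat * seq nat -> K :=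
  fun ab => \sum_(p < (size x).+1) (ab == (st (take p x), st (drop p x)))%:R.

Definition cmap (n : nat) (x : seq nat) : seq nat -> K :=
  fun y => ((y \in S n) && Theta n x y)%:R.

Definition rmap (f : seq nat -> K) : seq nat -> K :=
  fun y => if inZ Theta (size y) y then f y else 0.
Definition rr (g : seq nat * seq nat -> K) : seq nat * seq nat -> K :=
  fun ab => if inZ Theta (size ab.1) ab.1 && inZ Theta (size ab.2) ab.2
            then g ab else 0.

Definition coprodS_lin (n : nat) (f : seq nat -> K) : seq nat * seq nat -> K :=
  fun ab => \sum_(y <- S n) f y * coprodS y ab.

Definition coprodZ (n : nat) (x : seq nat) : seq nat * seq nat -> K :=
  rr (coprodS_lin n (cmap n x)).

Definition cmap_lin (n : nat) (f : seq nat -> K) : seq nat -> K :=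
  fun y => \sum_(x <- S n) f x * cmap n x y.

Definition cc_lin (n : nat) (h : seq nat * seq nat -> K) : seq nat * seq nat -> K :=
  fun ab => \sum_(p < n.+1) \sum_(u <- S p) \sum_(w <- S (n - p))
              h (u, w) * cmap p u ab.1 * cmap (n - p) w ab.2.

Definition prodS_lin (p q : nat) (f g : seq nat -> K) : seq nat -> K :=
  fun x => \sum_(u <- S p) \sum_(v <- S q) f u * g v * prodS u v x.

End Hopf.

Arguments prodS K u v x : clear implicits.
Arguments prodZ K Theta u v x : clear implicits.
Arguments coprodS K x ab : clear implicits.
Arguments cmap K Theta n x y : clear implicits.
Arguments rmap K Theta f y : clear implicits.
Arguments rr K Theta g ab : clear implicits.
Arguments coprodS_lin K n f ab : clear implicits.
Arguments coprodZ K Theta n x ab : clear implicits.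
Arguments cmap_lin K Theta n f y : clear implicits.
Arguments cc_lin K Theta n h ab : clear implicits.
Arguments prodS_lin K p q f g x : clear implicits.

(* Classes of a lattice congruence of the weak order have unique minima, which makes
   [c] injective.
   [xbar p x] is the meet of [x] with a fixed permutation, and the top of the fiber
   [xbar p _ = cross u v] is the join of [cross u v] with a fixed permutation.  With
   translationality, the first fact shows that congruent permutations have congruent
   standardized parts, and the second that a class minimum [x] has [xbar p x = cross u v]
   for the minima [u], [v] of the classes of its parts.  This gives multiplicativity.
   The coefficient of [a ⊗ b] in [Δ_S (c x)] counts the [y] congruent to [x] whose two
   halves standardize to [a] and [b].  By insertionality, replacing these
   standardizations by congruent ones stays in the class, so the count depends only on
   the classes of [a] and [b], which is comultiplicativity. *)

From Pilot Require Import Defs.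
From mathcomp Require Import all_boot all_order all_algebra zify.
From Stdlib Require Import ClassicalEpsilon Relation_Operators FunctionalExtensionality.
Import GRing.Theory.
Set Implicit Arguments. Unset Strict Implicit. Unset Printing Implicit Defensive.

(* Otherwise [inv] is the ring inverse. *)
Notation inv := Defs.inv.

Section PermutationWords.
Implicit Types (n : nat) (w x y z : seq nat).

Lemma memS n w : (w \in S n) = perm_eq w (iota 0 n).
Proof. by rewrite /S mem_permutations. Qed.

Lemma uniq_S n : uniq (S n).
Proof. exact: permutations_uniq. Qed.

Lemma S_uniq n w : w \in S n -> uniq w.
Proof. by rewrite memS => /perm_uniq ->; apply: iota_uniq. Qed.

Lemma S_mem n w a : w \in S n -> (a \in w) = (a < n).
Proof. by rewrite memS => /perm_mem ->; rewrite mem_iota. Qed.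

Lemma S_size n w : w \in S n -> size w = n.
Proof. by rewrite memS => /perm_size ->; rewrite size_iota. Qed.

Lemma iota_S n : iota 0 n \in S n.
Proof. by rewrite memS. Qed.

Lemma rev_S n w : w \in S n -> rev w \in S n.
Proof. by rewrite !memS perm_rev. Qed.

Lemma S_index_inj n w a b : w \in S n -> a < n -> b < n ->
  index a w = index b w -> a = b.
Proof.
move=> wS an bn E.
by rewrite -(nth_index 0 (_ : a \in w)) ?E ?nth_index ?(S_mem _ wS).
Qed.

Lemma mem_inv w a b :
  ((a, b) \in inv w) = [&& a \in w, b \in w, a < b & index b w < index a w].
Proof.
rewrite /inv mem_filter /=; apply/idP/and4P => [|[aw bw ab ba]].
  by case/andP=> /andP[ab ba] /allpairsP[[? ?] /= [aw bw [Ea Eb]]]; subst.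
by rewrite ab ba; apply/allpairsP; exists (a, b).
Qed.

Lemma mem_invS n w a b : w \in S n ->
  ((a, b) \in inv w) = [&& a < b, b < n & index b w < index a w].
Proof.
move=> wS; rewrite mem_inv !(S_mem _ wS).
case: (ltnP a b) => ab /=; last by rewrite !andbF.
case: (ltnP b n) => bn /=; last by rewrite !andbF.
by rewrite (ltn_trans ab bn).
Qed.

Lemma inv_uniq w : uniq w -> uniq (inv w).
Proof.
move=> uw; apply/filter_uniq/allpairs_uniq => //.
by move=> [a b] [c d] _ _ /= [-> ->].
Qed.

Lemma weak_leP x y :
  reflect (forall a b, (a, b) \in inv x -> (a, b) \in inv y) (weak_le x y).
Proof. by apply: (iffP allP) => [H a b|H [a b]]; apply: H. Qed.

Lemma weak_le_refl x : weak_le x x.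
Proof. by apply/weak_leP. Qed.

Lemma weak_le_trans x y z : weak_le x y -> weak_le y z -> weak_le x z.
Proof. by move=> /weak_leP H1 /weak_leP H2; apply/weak_leP => a b /H1 /H2. Qed.

Lemma map_index_iota w : uniq w -> map (index^~ w) w = iota 0 (size w).
Proof.
move=> uw; apply: (@eq_from_nth _ 0); rewrite size_map ?size_iota // => i iw.
by rewrite (nth_map 0) // nth_iota // index_uniq.
Qed.

Lemma index_count w a : uniq w -> a \in w ->
  index a w = count (fun b => index b w < index a w) w.
Proof.
move=> uw aw.
rewrite -(count_map (index^~ w) (fun i => i < index a w)) map_index_iota //.
have ia : index a w <= size w by rewrite ltnW ?index_mem.
rewrite -(subnKC ia) iotaD count_cat add0n.
rewrite (@eq_in_count _ _ predT) ?count_predT ?size_iota; last first.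
  by move=> i; rewrite mem_iota.
rewrite (@eq_in_count _ _ pred0) ?count_pred0 ?addn0 //.
by move=> i; rewrite mem_iota /= => /andP[H _]; rewrite ltnNge H.
Qed.

Lemma S_index_ltE n w a b : w \in S n -> a < n -> b < n -> a != b ->
  (index b w < index a w) = if a < b then (a, b) \in inv w else (b, a) \notin inv w.
Proof.
move=> wS an bn ab; rewrite !(mem_invS _ _ wS) an bn.
case: (ltngtP a b) => //= [_|/eqP]; last by rewrite (negbTE ab).
have ne : index a w != index b w by apply: contra_neq ab; apply: S_index_inj wS an bn.
by rewrite ltnNge leq_eqVlt (negbTE ne).
Qed.

Lemma S_eq_index n x y : x \in S n -> y \in S n ->
  (forall a, a < n -> index a x = index a y) -> x = y.
Proof.
move=> xS yS Eidx; apply: (@eq_from_nth _ 0) => [|i]; first by rewrite !(S_size xS, S_size yS).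
rewrite (S_size xS) => ilt.
have xi : nth 0 x i < n by rewrite -(S_mem _ xS) mem_nth ?(S_size xS).
have := Eidx _ xi; rewrite index_uniq ?(S_uniq xS) ?(S_size xS) // => Ei.
by rewrite {2}Ei nth_index // (S_mem _ yS).
Qed.

Lemma S_inv_inj n x y : x \in S n -> y \in S n -> inv x =i inv y -> x = y.
Proof.
move=> xS yS Einv; apply: (S_eq_index xS yS) => a an.
rewrite (index_count (S_uniq xS)) ?(S_mem _ xS) //.
rewrite (index_count (S_uniq yS)) ?(S_mem _ yS) //.
have /permP -> : perm_eq x (iota 0 n) by rewrite -memS.
have /permP -> : perm_eq y (iota 0 n) by rewrite -memS.
apply: eq_in_count => b; rewrite mem_iota /= => bn.
have [<-|ab] := eqVneq a b; first by rewrite !ltnn.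
by rewrite (S_index_ltE xS) ?(S_index_ltE yS) // !Einv.
Qed.

Lemma weak_le_anti n x y : x \in S n -> y \in S n ->
  weak_le x y -> weak_le y x -> x = y.
Proof.
move=> xS yS /weak_leP Hxy /weak_leP Hyx.
by apply: (S_inv_inj xS yS) => -[a b]; apply/idP/idP; [apply: Hxy | apply: Hyx].
Qed.

Lemma weak_lt_size n x y : x \in S n -> y \in S n -> weak_le x y -> x != y ->
  size (inv x) < size (inv y).
Proof.
move=> xS yS le_xy; apply: contraNT; rewrite -leqNgt => le_size.
have sub : {subset inv x <= inv y} by move=> [a b]; apply/weak_leP.
have [_ Einv] := uniq_min_size (inv_uniq (S_uniq xS)) sub le_size.
by rewrite (S_inv_inj xS yS Einv).
Qed.

Lemma inv_trans n w a b c : w \in S n ->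
  (a, b) \in inv w -> (b, c) \in inv w -> (a, c) \in inv w.
Proof.
move=> wS; rewrite !(mem_invS _ _ wS) => /and3P[ab bn i1] /and3P[bc cn i2].
by rewrite (ltn_trans ab bc) cn (ltn_trans i2 i1).
Qed.

Lemma inv_cotrans n w a b c : w \in S n -> a < b -> b < c ->
  (a, c) \in inv w -> ((a, b) \in inv w) || ((b, c) \in inv w).
Proof.
move=> wS ab bc; rewrite !(mem_invS _ _ wS) ab bc => /and3P[_ cn ca].
have bn := ltn_trans bc cn; rewrite bn cn /=.
have ne : index b w != index a w.
  by apply: contra_neq (negbT (gtn_eqF ab)); apply: S_index_inj wS bn (ltn_trans ab bn).
by case: ltngtP ne => // ba _; rewrite (ltn_trans ca ba) orbT.
Qed.

Lemma index_rev w a : uniq w -> a \in w ->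
  index a (rev w) = (size w).-1 - index a w.
Proof.
move=> uw aw; have ia : index a w < size w by rewrite index_mem.
have k_lt : (size w).-1 - index a w < size w by lia.
have : nth 0 (rev w) ((size w).-1 - index a w) = a.
  rewrite nth_rev //.
  have -> : size w - ((size w).-1 - index a w).+1 = index a w by lia.
  exact: nth_index.
by move=> E; rewrite -{1}E index_uniq ?size_rev ?rev_uniq.
Qed.

Lemma inv_rev n w a b : w \in S n ->
  ((a, b) \in inv (rev w)) = [&& a < b, b < n & (a, b) \notin inv w].
Proof.
move=> wS; rewrite (mem_invS _ _ (rev_S wS)) (mem_invS _ _ wS).
case: (ltnP a b) => //= ab; case: (ltnP b n) => //= bn.
have an := ltn_trans ab bn.
have ne : index a w != index b w.
  by apply: contra_neq (negbT (ltn_eqF ab)); apply: S_index_inj wS an bn.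
have := index_mem a w; have := index_mem b w.
rewrite !index_rev ?(S_uniq wS) ?(S_mem _ wS) // (S_size wS) => ibw iaw.
by apply/idP/idP; lia.
Qed.

Lemma weak_le_rev n x y : x \in S n -> y \in S n ->
  weak_le x y = weak_le (rev y) (rev x).
Proof.
move=> xS yS; apply/weak_leP/weak_leP => H a b.
  by rewrite (inv_rev _ _ yS) (inv_rev _ _ xS) => /and3P[-> -> /=]; apply: contra; apply: H.
move=> Hx; apply: contraT => Hy; move: (Hx); rewrite (mem_invS _ _ xS) => /and3P[ab bn _].
by have := H a b; rewrite (inv_rev _ _ yS) (inv_rev _ _ xS) ab bn Hy Hx => /(_ isT).
Qed.
End PermutationWords.

Section InversionSetRealization.
Variables (n : nat) (I : rel nat).
Hypothesis I_trans : forall a b c, a < b -> b < c -> I a b -> I b c -> I a c.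
Hypothesis I_cotrans : forall a b c, a < b -> b < c -> I a c -> I a b || I b c.

(* [inv_prec i j]: the letter [i] comes before [j] in a permutation with inversion set [I]. *)
Definition inv_prec i j : bool := if i < j then ~~ I i j else (j < i) && I j i.

Lemma inv_prec_trans : transitive inv_prec.
Proof.
move=> j i k; rewrite /inv_prec.
case: (ltngtP i j) => //= ij; case: (ltngtP j k) => //= jk.
- move=> /negP nIij /negP nIjk; rewrite (ltn_trans ij jk); apply/negP => Iik.
  by case/orP: (I_cotrans ij jk Iik).
- move=> /negP nIij Ikj; case: (ltngtP i k) => //= [ik|ki|eik].
  + by apply/negP => Iik; apply: nIij (I_trans ik jk Iik Ikj).
  + by case/orP: (I_cotrans ki ij Ikj) => // /nIij.
  + by case: nIij; rewrite eik.
- move=> Iji /negP nIjk; case: (ltngtP i k) => //= [ik|ki|eik].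
  + by apply/negP => Iik; apply: nIjk (I_trans ij ik Iji Iik).
  + by case/orP: (I_cotrans jk ki Iji) => // /nIjk.
  + by case: nIjk; rewrite -eik.
- move=> Iji Ikj; have ki := ltn_trans jk ij.
  by rewrite ltnNge (ltnW ki) ki; apply: I_trans jk ij Ikj Iji.
Qed.

Lemma inv_prec_asym i j : inv_prec i j -> ~~ inv_prec j i.
Proof. by rewrite /inv_prec; case: (ltngtP i j) => //= _; case: (I i j); case: (I j i). Qed.

Definition inv_prec_le i j := (i == j) || inv_prec i j.

Lemma inv_prec_le_trans : transitive inv_prec_le.
Proof.
move=> j i k /predU1P[->//|ij] /predU1P[<-|jk]; first by rewrite /inv_prec_le ij orbT.
by rewrite /inv_prec_le (inv_prec_trans ij jk) orbT.
Qed.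

Lemma inv_prec_le_total : total inv_prec_le.
Proof.
move=> i j; rewrite /inv_prec_le /inv_prec.
by case: (ltngtP i j) => //= _; case: (I _ _); rewrite ?orbT.
Qed.

Definition realize_inv := sort inv_prec_le (iota 0 n).

Lemma realize_inv_S : realize_inv \in S n.
Proof. by rewrite memS perm_sort. Qed.

Lemma index_realize_inv a b : a < n -> b < n -> a != b ->
  (index a realize_inv < index b realize_inv) = inv_prec a b.
Proof.
move=> an bn ab.
have sorted_r := sort_sorted inv_prec_le_total (iota 0 n).
have [ar br] : a \in realize_inv /\ b \in realize_inv by rewrite !(S_mem _ realize_inv_S).
apply/idP/idP => [|prec_ab].
  move/(sorted_ltn_index inv_prec_le_trans sorted_r _ _ ar br).
  by rewrite /inv_prec_le (negbTE ab).
have ne : index a realize_inv != index b realize_inv.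
  by apply: contra_neq ab; apply: S_index_inj realize_inv_S an bn.
rewrite ltn_neqAle ne leqNgt; apply/negP.
move/(sorted_ltn_index inv_prec_le_trans sorted_r _ _ br ar).
by rewrite /inv_prec_le eq_sym (negbTE ab) /=; apply/negP; apply: inv_prec_asym.
Qed.

Lemma inv_realize_inv a b : ((a, b) \in inv realize_inv) = [&& a < b, b < n & I a b].
Proof.
rewrite (mem_invS _ _ realize_inv_S); case: (ltnP a b) => //= ab.
case: (ltnP b n) => //= bn; have an := ltn_trans ab bn.
by rewrite index_realize_inv ?(gtn_eqF ab) // /inv_prec ltnNge (ltnW ab) ab.
Qed.
End InversionSetRealization.

Section WeakOrderJoin.
Variables (n : nat) (x y : seq nat).
Hypotheses (xS : x \in S n) (yS : y \in S n).

Let inv_step a b : Prop := (a, b) \in inv x \/ (a, b) \in inv y.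

(* The inversion set of the join is the transitive closure of [inv x ∪ inv y]. *)
Definition join_inv a b : bool :=
  if excluded_middle_informative (clos_trans nat inv_step a b) then true else false.

Lemma join_invP a b : reflect (clos_trans nat inv_step a b) (join_inv a b).
Proof. by rewrite /join_inv; case: excluded_middle_informative => H; constructor. Qed.

Lemma inv_closure_lt a b : clos_trans nat inv_step a b -> a < b /\ b < n.
Proof.
elim=> [u v [] | u v w _ [uv _] _ [vw wn]]; last by rewrite (ltn_trans uv vw).
  by rewrite (mem_invS _ _ xS) => /and3P[].
by rewrite (mem_invS _ _ yS) => /and3P[].
Qed.

Lemma inv_closure_cotrans a c : clos_trans nat inv_step a c ->
  forall b, a < b -> b < c -> clos_trans nat inv_step a b \/ clos_trans nat inv_step b c.
Proof.
elim=> [u v Iuv b ub bv | u m v Tum IHum Tmv IHmv b ub bv].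
  have Ib : inv_step u b \/ inv_step b v.
    case: Iuv => [/(inv_cotrans xS ub bv) | /(inv_cotrans yS ub bv)] /orP[];
    by [left; left | right; left | left; right | right; right].
  by case: Ib => Ib; [left | right]; apply: t_step.
have [um _] := inv_closure_lt Tum; have [mv _] := inv_closure_lt Tmv.
case: (ltngtP b m) => [bm|mb|->]; last by left.
  by case: (IHum b ub bm) => [|Tbm]; [left | right; apply: t_trans Tbm Tmv].
by case: (IHmv b mb bv) => [Tmb|]; [left; apply: t_trans Tum Tmb | right].
Qed.

Lemma join_exists : exists j, is_join n j x y.
Proof.
have Itrans a b c : a < b -> b < c -> join_inv a b -> join_inv b c -> join_inv a c.
  by move=> _ _ /join_invP Tab /join_invP Tbc; apply/join_invP/(t_trans _ _ _ _ _ Tab Tbc).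
have Icotrans a b c : a < b -> b < c -> join_inv a c -> join_inv a b || join_inv b c.
  move=> ab bc /join_invP/inv_closure_cotrans/(_ b ab bc).
  by case=> /join_invP ->; rewrite ?orbT.
have inv_j := inv_realize_inv n Itrans Icotrans.
have step_inv a b : inv_step a b -> (a, b) \in inv (realize_inv n join_inv).
  move=> Sab; have Tab := t_step _ _ _ _ Sab; have [ab bn] := inv_closure_lt Tab.
  by rewrite inv_j ab bn; apply/join_invP.
exists (realize_inv n join_inv); split; first exact: realize_inv_S.
- by apply/weak_leP => a b Ixab; apply: step_inv; left.
- by apply/weak_leP => a b Iyab; apply: step_inv; right.
move=> w wS /weak_leP Hx /weak_leP Hy; apply/weak_leP => a b.
rewrite inv_j => /and3P[_ _ /join_invP].
by elim=> [u v [/Hx|/Hy] // | u m v _ Ium _ Imv]; apply: inv_trans wS Ium Imv.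
Qed.
End WeakOrderJoin.

Lemma meet_exists n x y : x \in S n -> y \in S n -> exists m, is_meet n m x y.
Proof.
move=> xS yS; have [j [jS xj yj j_min]] := join_exists (rev_S xS) (rev_S yS).
have jrS := rev_S jS; exists (rev j); split=> //.
- by rewrite (weak_le_rev jrS xS) revK.
- by rewrite (weak_le_rev jrS yS) revK.
move=> z zS zx zy; rewrite (weak_le_rev zS jrS) revK.
by apply: j_min; rewrite ?rev_S // -?(weak_le_rev zS xS) -?(weak_le_rev zS yS).
Qed.

Lemma is_meet_sym n m x y : is_meet n m x y -> is_meet n m y x.
Proof. by case=> mS mx my m_max; split=> // z zS zx zy; apply: m_max. Qed.

Lemma is_meet_le n x y : x \in S n -> weak_le x y -> is_meet n x x y.
Proof. by move=> xS xy; split=> //; apply: weak_le_refl. Qed.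

Definition is_min n (R : rel (seq nat)) x :=
  x \in S n /\ forall y, y \in S n -> R x y -> weak_le x y.

Lemma inZP Theta n x : reflect (is_min n (Theta n) x) (inZ Theta n x).
Proof.
apply: (iffP andP) => [[xS /allP x_min]|[xS x_min]]; split=> //.
  by move=> y yS Rxy; have := x_min y yS; rewrite Rxy.
by apply/allP => y yS; apply/implyP; apply: x_min.
Qed.

Section CongruenceClasses.
Variables (n : nat) (R : rel (seq nat)).
Hypothesis RC : lattice_congruence n R.

Lemma congr_refl x : x \in S n -> R x x.
Proof. by case: RC => H _ _ _ _; apply: H. Qed.

Lemma congr_sym x y : x \in S n -> y \in S n -> R x y -> R y x.
Proof. by case: RC => _ H _ _ _; apply: H. Qed.

Lemma congr_trans x y z : x \in S n -> y \in S n -> z \in S n -> R x y -> R y z -> R x z.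
Proof. by case: RC => _ _ H _ _; apply: H. Qed.

Lemma congr_meet x y z m m' : x \in S n -> y \in S n -> z \in S n ->
  R x y -> is_meet n m x z -> is_meet n m' y z -> R m m'.
Proof. by case: RC => _ _ _ H _; apply: H. Qed.

Lemma congr_join x y z j j' : x \in S n -> y \in S n -> z \in S n ->
  R x y -> is_join n j x z -> is_join n j' y z -> R j j'.
Proof. by case: RC => _ _ _ _ H; apply: H. Qed.

(* A non-minimal [y] is congruent to its meet with any congruent [y'] not above it,
   which has fewer inversions. *)
Lemma exists_class_min y : y \in S n -> exists2 x, is_min n R x & R x y.
Proof.
have [k] := ubnP (size (inv y)); elim: k y => // k IH y lt_yk yS.
have [y_min|] := boolP (all (fun y' => R y y' ==> weak_le y y') (S n)).
  exists y; last exact: congr_refl.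
  by split=> // z zS Ryz; move/allP/(_ z zS): y_min; rewrite Ryz.
rewrite -has_predC => /hasP[y' y'S] /=; rewrite negb_imply => /andP[Ryy' not_yy'].
have [m m_meet] := meet_exists y'S yS; have [mS my' my _] := m_meet.
have Rmy : R m y.
  apply: (congr_meet y'S yS yS (congr_sym yS y'S Ryy') m_meet).
  exact: is_meet_le (weak_le_refl y).
have lt_mk : size (inv m) < k.
  rewrite -ltnS (leq_trans _ lt_yk) // ltnS (weak_lt_size mS yS my) //.
  by apply: contraNneq not_yy' => <-.
have [x x_min Rxm] := IH m lt_mk mS.
by exists x => //; apply: congr_trans (proj1 x_min) mS yS Rxm Rmy.
Qed.

Lemma class_min_unique x x' : is_min n R x -> is_min n R x' -> R x x' -> x = x'.
Proof.
move=> [xS x_min] [x'S x'_min] Rxx'.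
apply: (weak_le_anti xS x'S); first exact: x_min.
exact: x'_min xS (congr_sym xS x'S Rxx').
Qed.
End CongruenceClasses.

Section InversionsOfWords.
Implicit Types (w v : seq nat).

Lemma index_filter_lt (P : pred nat) w a b : P a -> P b ->
  (index b (filter P w) < index a (filter P w)) = (index b w < index a w).
Proof.
move=> Pa Pb; elim: w => [|c w IH] //=.
have [Pc|nPc] /= := boolP (P c).
  by case: (c == b); case: (c == a) => //=; rewrite ltnS IH.
have [ca cb] : c != a /\ c != b by split; apply: contraNneq nPc => ->.
by rewrite (negbTE ca) (negbTE cb) ltnS IH.
Qed.

Lemma inv_filter (P : pred nat) w a b :
  ((a, b) \in inv (filter P w)) = [&& P a, P b & (a, b) \in inv w].
Proof.
rewrite !mem_inv !mem_filter.
have [Pa|] //= := boolP (P a); have [Pb|] //= := boolP (P b); last by rewrite andbF.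
by rewrite index_filter_lt.
Qed.

Lemma inv_cat w v a b : uniq (w ++ v) ->
  ((a, b) \in inv (w ++ v)) =
  [|| (a, b) \in inv w, (a, b) \in inv v | [&& a \in v, b \in w & a < b]].
Proof.
rewrite cat_uniq => /and3P[_ /hasPn disj _].
have wNv c : c \in w -> c \notin v by apply: contraL => /disj.
rewrite !mem_inv !mem_cat !index_cat.
have [aw|aw] := boolP (a \in w); have [bw|bw] := boolP (b \in w) => /=.
- by rewrite (negbTE (wNv _ aw)) /= !orbF.
- have := index_mem a w; rewrite aw (negbTE (wNv _ aw)) => ia.
  by rewrite [_ < index a w]ltnNge (leq_trans (ltnW ia) (leq_addr _ _)) !andbF.
- have := index_mem b w; rewrite bw (negbTE (wNv _ bw)) => ib.
  by rewrite (leq_trans ib (leq_addr _ _)) !andbT !andbF.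
- by rewrite ltn_add2l andbF orbF.
Qed.

Lemma inv_map_addn p v a b :
  ((a, b) \in inv (map (addn p) v)) = (p <= a) && ((a - p, b - p) \in inv v).
Proof.
rewrite !mem_inv; case: (leqP p a) => pa /=; last first.
  by apply/negbTE/negP => /andP[/mapP[c _ E] _]; lia.
case: (ltnP a b) => ab; last by rewrite !andbF; apply/esym/negbTE; lia.
have [a' Ea] : exists a', a = p + a' by exists (a - p); lia.
have [b' Eb] : exists b', b = p + b' by exists (b - p); lia.
subst a b; rewrite ltn_add2l in ab.
by rewrite !addKn !(mem_map (@addnI p)) !index_map ?ab //; apply: addnI.
Qed.
End InversionsOfWords.

Lemma count_lt_iota k m a : k <= a <= k + m ->
  count (fun b => b < a) (iota k m) = a - k.
Proof.
move=> /andP[ka am]; have -> : m = (a - k) + (k + m - a) by lia.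
rewrite iotaD count_cat (@eq_in_count _ _ predT) ?count_predT ?size_iota; last first.
  by move=> i; rewrite mem_iota => /andP[_ ?] /=; lia.
rewrite (@eq_in_count _ _ pred0) ?count_pred0 ?addn0 //.
by move=> i; rewrite mem_iota => /andP[? _] /=; lia.
Qed.

Lemma st_perm_iota k m s : perm_eq s (iota k m) -> st s = map (subn^~ k) s.
Proof.
move=> s_perm; apply/eq_in_map => a as_.
have := as_; rewrite (perm_mem s_perm) mem_iota => /andP[ka am].
by rewrite (permP s_perm) count_lt_iota // ka ltnW.
Qed.

Lemma index_iota0 k a : a < k -> index a (iota 0 k) = a.
Proof.
by move=> ak; rewrite -{1}(add0n a) -(nth_iota 0 0 ak) index_uniq ?size_iota ?iota_uniq.
Qed.

Lemma inv_iota k a b : ((a, b) \in inv (iota 0 k)) = false.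
Proof.
rewrite (mem_invS _ _ (iota_S k)); apply/and3P => -[ab bk].
by rewrite !index_iota0 ?(ltn_trans ab bk) // ltnNge ltnW.
Qed.

Lemma inv_rev_iota k a b : ((a, b) \in inv (rev (iota 0 k))) = (a < b) && (b < k).
Proof. by rewrite (inv_rev _ _ (iota_S k)) inv_iota andbT. Qed.

Definition low p (w : seq nat) := [seq a <- w | a < p].
Definition high p (w : seq nat) := [seq a - p | a <- w & p <= a].
(* The largest [x] with [xbar p x = cross u v]. *)
Definition fiber_top p (u v : seq nat) := map (addn p) v ++ u.

Section Blocks.
Variables p q : nat.
Implicit Types (u v w x : seq nat).

Lemma filter_iota_low : [seq a <- iota 0 (p + q) | a < p] = iota 0 p.
Proof.
rewrite iotaD filter_cat add0n (@eq_in_filter _ _ predT) ?filter_predT; last first.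
  by move=> i; rewrite mem_iota.
rewrite (@eq_in_filter _ _ pred0) ?filter_pred0 ?cats0 //.
by move=> i; rewrite mem_iota => /andP[pi _] /=; rewrite ltnNge pi.
Qed.

Lemma filter_iota_high : [seq a <- iota 0 (p + q) | p <= a] = iota p q.
Proof.
rewrite iotaD filter_cat add0n (@eq_in_filter _ _ pred0) ?filter_pred0; last first.
  by move=> i; rewrite mem_iota => /andP[_ ip] /=; rewrite leqNgt ip.
by rewrite (@eq_in_filter _ _ predT) ?filter_predT // => i; rewrite mem_iota => /andP[].
Qed.

Lemma low_S x : x \in S (p + q) -> low p x \in S p.
Proof. by rewrite !memS -filter_iota_low; apply: perm_filter. Qed.

Lemma filter_high_perm x : x \in S (p + q) -> perm_eq [seq a <- x | p <= a] (iota p q).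
Proof. by rewrite memS -filter_iota_high; apply: perm_filter. Qed.

Lemma high_S x : x \in S (p + q) -> high p x \in S q.
Proof.
move=> xS; rewrite memS.
have -> : iota 0 q = map (subn^~ p) (iota p q).
  rewrite -[in iota p q](addn0 p) iotaDl -map_comp -[LHS]map_id.
  by apply: eq_map => a /=; rewrite addKn.
exact/perm_map/filter_high_perm.
Qed.

Lemma map_addn_high x : map (addn p) (high p x) = [seq a <- x | p <= a].
Proof.
rewrite -map_comp -[RHS]map_id; apply/eq_in_map => a.
by rewrite mem_filter => /andP[pa _] /=; rewrite subnKC.
Qed.

Lemma xbarE x : x \in S (p + q) -> xbar p x = cross (low p x) (high p x).
Proof.
move=> xS; rewrite /xbar (st_perm_iota (filter_high_perm xS)).
by have := low_S xS; rewrite memS => /st_perm_iota ->; rewrite map_id_in // => a; rewrite subn0.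
Qed.

Lemma cross_sizeE u v : size u = p -> cross u v = u ++ map (addn p) v.
Proof. by rewrite /cross => ->. Qed.

Lemma mem_map_addn v b : v \in S q -> (b \in map (addn p) v) = (p <= b < p + q).
Proof.
move=> vS; case: (leqP p b) => pb /=; last by apply/negbTE/negP => /mapP[c _ E]; lia.
by rewrite -(subnKC pb) (mem_map (@addnI p)) (S_mem _ vS) ltn_add2l.
Qed.

Lemma cross_S u v : u \in S p -> v \in S q -> cross u v \in S (p + q).
Proof.
move=> uS vS; rewrite cross_sizeE ?(S_size uS) // memS.
rewrite iotaD add0n -[in iota p q](addn0 p) iotaDl.
by apply: perm_cat; [|apply: perm_map]; rewrite -memS.
Qed.

Lemma fiber_top_S u v : u \in S p -> v \in S q -> fiber_top p u v \in S (p + q).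
Proof.
by move=> uS vS; rewrite memS perm_catC -memS -cross_sizeE ?(S_size uS) ?cross_S.
Qed.

Lemma cross_inj u v u' v' : size u = p -> size u' = p ->
  cross u v = cross u' v' -> u = u' /\ v = v'.
Proof.
move=> su su'; rewrite !cross_sizeE // => E.
have Eu : u = u' by have := congr1 (take p) E; rewrite !take_size_cat.
subst u'; split=> //; apply: (inj_map (@addnI p)).
by have := congr1 (drop p) E; rewrite !drop_size_cat.
Qed.

Lemma inv_low w a b : ((a, b) \in inv (low p w)) = (b < p) && ((a, b) \in inv w).
Proof.
rewrite /low inv_filter; case: (ltnP b p) => bp /=; last by rewrite andbF.
case Iab: ((a, b) \in inv w); rewrite ?andbF //.
by move: Iab; rewrite mem_inv => /and4P[_ _ ab _]; rewrite (ltn_trans ab bp).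
Qed.

Lemma inv_high x a b : ((a, b) \in inv (high p x)) = ((p + a, p + b) \in inv x).
Proof.
have := inv_map_addn p (high p x) (p + a) (p + b).
by rewrite map_addn_high !addKn leq_addr inv_filter !leq_addr.
Qed.

Lemma inv_cross u v a b : u \in S p -> v \in S q ->
  ((a, b) \in inv (cross u v)) =
  ((a, b) \in inv u) || (p <= a) && ((a - p, b - p) \in inv v).
Proof.
move=> uS vS; have U := S_uniq (cross_S uS vS).
rewrite cross_sizeE ?(S_size uS) // in U *.
rewrite inv_cat // inv_map_addn (mem_map_addn _ vS) (S_mem _ uS).
case: (leqP p a) => pa; case: (ltnP b p) => bp /=; rewrite ?andbF ?orbF //.
by rewrite [a < b]ltnNge (ltnW (leq_trans bp pa)) andbF orbF.
Qed.

Lemma inv_fiber_top u v a b : u \in S p -> v \in S q ->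
  ((a, b) \in inv (fiber_top p u v)) =
  ((a, b) \in inv (cross u v)) || [&& a < p, p <= b & b < p + q].
Proof.
move=> uS vS; have U := S_uniq (fiber_top_S uS vS).
rewrite /fiber_top in U *; rewrite inv_cat // inv_cross // inv_map_addn.
rewrite (mem_map_addn _ vS) (S_mem _ uS).
case: (ltnP a p) => ap; case: (leqP p b) => pb /=; rewrite ?andbF ?orbF //.
  by rewrite (leq_trans ap pb) andbT.
all: by rewrite orbC.
Qed.

Definition cross_top := cross (rev (iota 0 p)) (rev (iota 0 q)).

Lemma rev_iota_S k : rev (iota 0 k) \in S k.
Proof. exact/rev_S/iota_S. Qed.

Lemma cross_top_S : cross_top \in S (p + q).
Proof. exact: cross_S (rev_iota_S p) (rev_iota_S q). Qed.

Lemma inv_cross_top a b : ((a, b) \in inv cross_top) =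
  ((a < b) && (b < p)) || (p <= a) && ((a - p < b - p) && (b - p < q)).
Proof. by rewrite (inv_cross _ _ (rev_iota_S p) (rev_iota_S q)) !inv_rev_iota. Qed.

Lemma inv_xbar x a b : x \in S (p + q) ->
  ((a, b) \in inv (xbar p x)) = ((b < p) || (p <= a)) && ((a, b) \in inv x).
Proof.
move=> xS; rewrite xbarE // (inv_cross _ _ (low_S xS) (high_S xS)) inv_low inv_high.
case: (ltnP b p) => bp /=.
  case: ((a, b) \in inv x) => //=; case: (leqP p a) => //= pa.
  by apply/negbTE; rewrite mem_inv; apply/negP => /and4P[_ _ ? _]; lia.
by case: (leqP p a) => pa //=; rewrite !subnKC.
Qed.

Lemma xbar_S x : x \in S (p + q) -> xbar p x \in S (p + q).
Proof. by move=> xS; rewrite xbarE // cross_S ?low_S ?high_S. Qed.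

Lemma xbar_meet x : x \in S (p + q) -> is_meet (p + q) (xbar p x) x cross_top.
Proof.
move=> xS; split; first exact: xbar_S.
- by apply/weak_leP => a b; rewrite inv_xbar // => /andP[].
- apply/weak_leP => a b; rewrite inv_xbar // inv_cross_top (mem_invS _ _ xS).
  by case/andP=> /orP[] ? /and3P[? ? _]; apply/orP; [left | right]; lia.
move=> z zS /weak_leP zx /weak_leP zt; apply/weak_leP => a b Iz.
by rewrite inv_xbar // zx // andbT; move: (zt a b Iz); rewrite inv_cross_top; lia.
Qed.

Definition fiber_top_id := fiber_top p (iota 0 p) (iota 0 q).

Lemma inv_fiber_top_id a b : ((a, b) \in inv fiber_top_id) = [&& a < p, p <= b & b < p + q].
Proof.
rewrite (inv_fiber_top _ _ (iota_S p) (iota_S q)).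
by rewrite (inv_cross _ _ (iota_S p) (iota_S q)) !inv_iota andbF.
Qed.

Lemma fiber_top_join u v : u \in S p -> v \in S q ->
  is_join (p + q) (fiber_top p u v) (cross u v) fiber_top_id.
Proof.
move=> uS vS; split; first exact: fiber_top_S.
- by apply/weak_leP => a b Iab; rewrite inv_fiber_top // Iab.
- by apply/weak_leP => a b Iab; rewrite inv_fiber_top // -inv_fiber_top_id Iab orbT.
move=> z zS /weak_leP le_cross /weak_leP le_id; apply/weak_leP => a b.
by rewrite inv_fiber_top // -inv_fiber_top_id => /orP[/le_cross|/le_id].
Qed.

Lemma low_fiber_top u v : u \in S p -> low p (fiber_top p u v) = u.
Proof.
move=> uS; rewrite /low /fiber_top filter_cat (@eq_in_filter _ _ pred0) ?filter_pred0.
  by rewrite (@eq_in_filter _ _ predT) ?filter_predT // => c; rewrite (S_mem _ uS).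
by move=> c /mapP[d _ ->] /=; rewrite ltnNge leq_addr.
Qed.

Lemma high_fiber_top u v : u \in S p -> high p (fiber_top p u v) = v.
Proof.
move=> uS; rewrite /high /fiber_top filter_cat (@eq_in_filter _ _ pred0 u) ?filter_pred0.
  rewrite cats0 (@eq_in_filter _ _ predT) ?filter_predT -?map_comp.
    by rewrite map_id_in // => c _ /=; rewrite addKn.
  by move=> c /mapP[d _ ->]; rewrite leq_addr.
by move=> c; rewrite (S_mem _ uS) /= => cp; rewrite leqNgt cp.
Qed.

Lemma weak_le_fiber_top x : x \in S (p + q) -> weak_le x (fiber_top p (low p x) (high p x)).
Proof.
move=> xS; apply/weak_leP => a b Iab.
rewrite (inv_fiber_top _ _ (low_S xS) (high_S xS)) -xbarE // inv_xbar // Iab andbT.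
by move: Iab; rewrite (mem_invS _ _ xS) => /and3P[? ? _]; case: (ltnP b p); case: (leqP p a).
Qed.

Lemma low_weak_le w z : weak_le w z -> weak_le (low p w) (low p z).
Proof. by move/weak_leP=> le_wz; apply/weak_leP => a b; rewrite !inv_low => /andP[-> /le_wz]. Qed.

Lemma high_weak_le w z : weak_le w z -> weak_le (high p w) (high p z).
Proof. by move/weak_leP=> le_wz; apply/weak_leP => a b; rewrite !inv_high => /le_wz. Qed.
End Blocks.

Lemma H_family_congr Theta n : H_family Theta -> lattice_congruence n (Theta n).
Proof. by case=> RC _; apply: RC. Qed.

Section HFamilyProjections.
Variables (p q : nat) (Theta : nat -> rel (seq nat)).
Hypothesis HF : H_family Theta.

Let RC n := H_family_congr n HF.

Lemma congr_low_high x y : x \in S (p + q) -> y \in S (p + q) -> Theta (p + q) x y ->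
  Theta p (low p x) (low p y) /\ Theta q (high p x) (high p y).
Proof.
move=> xS yS Rxy; have [_ [transl _]] := HF.
have := congr_meet (RC _) xS yS (cross_top_S p q) Rxy (xbar_meet xS) (xbar_meet yS).
rewrite (xbarE xS) (xbarE yS).
by move/(transl _ _ _ _ _ _ (low_S xS) (low_S yS) (high_S xS) (high_S yS)).
Qed.

(* [x] lies below the top of its fiber, which is congruent to the top of the
   fiber of [cross u v]. *)
Lemma min_low_high x u v : is_min (p + q) (Theta (p + q)) x ->
  is_min p (Theta p) u -> is_min q (Theta q) v ->
  Theta p u (low p x) -> Theta q v (high p x) -> low p x = u /\ high p x = v.
Proof.
move=> [xS x_min] [uS u_min] [vS v_min] Ru Rv; have [_ [transl _]] := HF.
have [lS hS] := (low_S xS, high_S xS).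
have [tS txS] := (fiber_top_S uS vS, fiber_top_S lS hS).
have Rcross : Theta (p + q) (cross u v) (cross (low p x) (high p x)) by apply/transl.
have Rtop : Theta (p + q) (fiber_top p u v) (fiber_top p (low p x) (high p x)).
  apply: (congr_join (RC _) _ _ _ Rcross (fiber_top_join uS vS) (fiber_top_join lS hS));
  by [apply: cross_S | apply: cross_S | apply: fiber_top_S; apply: iota_S].
have [z z_meet] := meet_exists xS tS; have [zS zx zt _] := z_meet.
have Rxz : Theta (p + q) x z.
  apply: (congr_meet (RC _) txS tS xS (congr_sym (RC _) tS txS Rtop)).
    by apply: is_meet_sym; apply: (is_meet_le xS); apply: (weak_le_fiber_top xS).
  exact: is_meet_sym.
have xt := weak_le_trans (x_min z zS Rxz) zt.
split.
  apply: (weak_le_anti lS uS); last exact: u_min.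
  by rewrite -[u in weak_le _ u](low_fiber_top v uS); apply: low_weak_le.
apply: (weak_le_anti hS vS); last exact: v_min.
by rewrite -[v in weak_le _ v](high_fiber_top v uS); apply: high_weak_le.
Qed.

Lemma xbar_minE x y u v : is_min (p + q) (Theta (p + q)) x ->
  is_min p (Theta p) u -> is_min q (Theta q) v ->
  y \in S (p + q) -> Theta (p + q) x y ->
  (xbar p x == cross u v) = Theta p u (low p y) && Theta q v (high p y).
Proof.
move=> x_min u_min v_min yS Rxy; have [xS _] := x_min.
have [uS _] := u_min; have [vS _] := v_min.
have [Rl Rh] := congr_low_high xS yS Rxy.
rewrite (xbarE xS); apply/eqP/andP => [E|[Ru Rv]].
  by have [<- <-] := cross_inj (S_size (low_S xS)) (S_size uS) E.
have [lxS lyS] := (low_S xS, low_S yS); have [hxS hyS] := (high_S xS, high_S yS).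
have Ru' := congr_trans (RC p) uS lyS lxS Ru (congr_sym (RC p) lxS lyS Rl).
have Rv' := congr_trans (RC q) vS hyS hxS Rv (congr_sym (RC q) hxS hyS Rh).
by have [-> ->] := min_low_high x_min u_min v_min Ru' Rv'.
Qed.
End HFamilyProjections.

Section Relabelling.
Implicit Types (Q s t a : seq nat).

(* The word with the letters of [Q] whose standardization is [a]. *)
Definition relabel Q a := map (nth 0 (sort leq Q)) a.

Lemma index_sorted_ltn t c : sorted ltn t -> c \in t -> index c t = count (ltn^~ c) t.
Proof.
elim: t => [|d t IH] //= t_sorted; rewrite in_cons.
have d_min := order_path_min ltn_trans t_sorted.
have [<-|dc] /= := eqVneq d c => [_|ct].
  rewrite ltnn; apply/esym/eqP; rewrite -leqn0 leqNgt -has_count.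
  by apply/hasP => -[e /(allP d_min) /= ? ?]; lia.
by rewrite (allP d_min c ct) IH ?(path_sorted t_sorted).
Qed.

Lemma sort_uniq_sorted_ltn s : uniq s -> sorted ltn (sort leq s).
Proof.
by move=> us; rewrite ltn_sorted_uniq_leq sort_uniq us sort_sorted //; apply: leq_total.
Qed.

Lemma st_index s : uniq s -> st s = map (index^~ (sort leq s)) s.
Proof.
move=> us; apply/eq_in_map => a as_ /=.
by rewrite index_sorted_ltn ?sort_uniq_sorted_ltn ?mem_sort // count_sort.
Qed.

Lemma st_S s : uniq s -> st s \in S (size s).
Proof.
move=> us; rewrite st_index // memS -(size_sort leq) -(map_index_iota (_ : uniq (sort leq s))).
  by apply: perm_map; rewrite perm_sym perm_sort.
by rewrite sort_uniq.
Qed.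

Lemma relabel_st s : uniq s -> relabel s (st s) = s.
Proof.
move=> us; rewrite st_index // /relabel -map_comp map_id_in // => a as_ /=.
by rewrite nth_index ?mem_sort.
Qed.

Lemma relabel_perm Q a : a \in S (size Q) -> perm_eq (relabel Q a) Q.
Proof.
move=> aS; apply: (@perm_trans _ (map (nth 0 (sort leq Q)) (iota 0 (size Q)))).
  by apply: perm_map; rewrite -memS.
by rewrite -(size_sort leq) map_nth_iota0 // take_size perm_sort.
Qed.

Lemma sort_relabel Q a : a \in S (size Q) -> sort leq (relabel Q a) = sort leq Q.
Proof. by move=> aS; apply/(perm_sortP leq_total leq_trans anti_leq)/relabel_perm. Qed.

Lemma st_relabel Q a : uniq Q -> a \in S (size Q) -> st (relabel Q a) = a.
Proof.
move=> uQ aS; have uR : uniq (relabel Q a) by rewrite (perm_uniq (relabel_perm aS)).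
rewrite st_index // sort_relabel // /relabel -map_comp map_id_in // => i ia /=.
by rewrite index_uniq ?sort_uniq ?size_sort -?(S_mem _ aS).
Qed.

Lemma relabel_relabel Q a b : a \in S (size Q) -> relabel (relabel Q a) b = relabel Q b.
Proof. by move=> aS; rewrite /relabel -/(relabel Q a) sort_relabel. Qed.
End Relabelling.

(* [count (cut_in_class (Theta n) k x a b) (S n)] is the coefficient of [a ⊗ b]
   in [Δ_S (c x)]. *)
Definition cut_in_class (R : rel (seq nat)) k x0 a b y :=
  [&& R x0 y, st (take k y) == a & st (drop k y) == b].

Section CutStandardizations.
Variables (k m : nat).
Implicit Types (a b y : seq nat).

Definition replace_st a b y := relabel (take k y) a ++ relabel (drop k y) b.

Lemma size_take_S y : y \in S (k + m) -> size (take k y) = k.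
Proof. by move=> yS; rewrite size_takel // (S_size yS) leq_addr. Qed.

Lemma size_drop_S y : y \in S (k + m) -> size (drop k y) = m.
Proof. by move=> yS; rewrite size_drop (S_size yS) addKn. Qed.

Lemma st_take_S y : y \in S (k + m) -> st (take k y) \in S k.
Proof. by move=> yS; rewrite -{2}(size_take_S yS) st_S ?take_uniq ?(S_uniq yS). Qed.

Lemma st_drop_S y : y \in S (k + m) -> st (drop k y) \in S m.
Proof. by move=> yS; rewrite -(size_drop_S yS) st_S ?drop_uniq ?(S_uniq yS). Qed.

Lemma replace_st_S a b y : y \in S (k + m) -> a \in S k -> b \in S m ->
  replace_st a b y \in S (k + m).
Proof.
move=> yS aS bS; rewrite memS; apply: (@perm_trans _ y); last by rewrite -memS.
by rewrite /replace_st -{3}(cat_take_drop k y); apply: perm_cat; apply: relabel_perm;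
  rewrite ?size_take_S ?size_drop_S.
Qed.

Lemma take_replace_st a b y : a \in S k -> take k (replace_st a b y) = relabel (take k y) a.
Proof. by move=> aS; rewrite take_size_cat // size_map (S_size aS). Qed.

Lemma drop_replace_st a b y : a \in S k -> drop k (replace_st a b y) = relabel (drop k y) b.
Proof. by move=> aS; rewrite drop_size_cat // size_map (S_size aS). Qed.

Lemma st_take_replace_st a b y : y \in S (k + m) -> a \in S k ->
  st (take k (replace_st a b y)) = a.
Proof.
by move=> yS aS; rewrite take_replace_st // st_relabel ?take_uniq ?(S_uniq yS) ?size_take_S.
Qed.

Lemma st_drop_replace_st a b y : y \in S (k + m) -> a \in S k -> b \in S m ->
  st (drop k (replace_st a b y)) = b.
Proof.
by move=> yS aS bS; rewrite drop_replace_st // st_relabel ?drop_uniq ?(S_uniq yS) ?size_drop_S.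
Qed.

Lemma replace_stK a' b' y : y \in S (k + m) -> a' \in S k -> b' \in S m ->
  replace_st (st (take k y)) (st (drop k y)) (replace_st a' b' y) = y.
Proof.
move=> yS a'S b'S; have uy := S_uniq yS.
rewrite /replace_st take_replace_st // drop_replace_st //.
rewrite !relabel_relabel ?size_take_S ?size_drop_S //.
by rewrite !relabel_st ?take_uniq ?drop_uniq // cat_take_drop.
Qed.

Variable Theta : nat -> rel (seq nat).
Hypothesis HF : H_family Theta.

Lemma congr_replace_st a' b' y : y \in S (k + m) -> a' \in S k -> b' \in S m ->
  Theta k (st (take k y)) a' -> Theta m (st (drop k y)) b' ->
  Theta (k + m) y (replace_st a' b' y).
Proof.
move=> yS a'S b'S Ra Rb; have [_ [_ insert]] := HF.
have zS := replace_st_S yS a'S b'S; have uy := S_uniq yS.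
apply: (insert k m (take k y) _ _ _ (st (take k y)) a' (st (drop k y)) b') => //.
- by rewrite take_uniq.
- exact: size_take_S.
- by apply/allP => c /mem_take; rewrite (S_mem _ yS).
- exact: st_take_S.
- exact: st_drop_S.
- by rewrite /is_phi yS perm_refl !eqxx.
rewrite /is_phi zS st_take_replace_st ?st_drop_replace_st // !eqxx !andbT.
by rewrite take_replace_st // relabel_perm ?size_take_S.
Qed.

Variable x0 : seq nat.
Hypothesis x0S : x0 \in S (k + m).

(* [replace_st a' b'] injects the first set into the second; insertionality keeps
   its image in the class of [x0]. *)
Lemma count_cut_in_class_le a b a' b' : a' \in S k -> b' \in S m ->
  Theta k a a' -> Theta m b b' ->
  count (cut_in_class (Theta (k + m)) k x0 a b) (S (k + m))
  <= count (cut_in_class (Theta (k + m)) k x0 a' b') (S (k + m)).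
Proof.
move=> a'S b'S Ra Rb; have RC n := H_family_congr n HF.
rewrite -!size_filter -(size_map (replace_st a' b')).
apply: uniq_leq_size.
  rewrite map_inj_in_uniq ?filter_uniq ?uniq_S // => y1 y2.
  rewrite !mem_filter => /andP[/and3P[_ /eqP <- /eqP <-] y1S].
  move=> /andP[/and3P[_ /eqP E1 /eqP E2] y2S] E.
  by rewrite -(replace_stK y1S a'S b'S) E -E1 -E2 replace_stK.
move=> z /mapP[y]; rewrite mem_filter => /andP[/and3P[Rx0y /eqP Ea /eqP Eb] yS] ->.
have zS := replace_st_S yS a'S b'S.
rewrite mem_filter zS /cut_in_class st_take_replace_st ?st_drop_replace_st // !eqxx !andbT.
apply: (congr_trans (RC _) x0S yS zS Rx0y).
by apply: congr_replace_st; rewrite ?Ea ?Eb.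
Qed.

Lemma count_cut_in_class_congr a b a' b' : a \in S k -> a' \in S k -> b \in S m -> b' \in S m ->
  Theta k a a' -> Theta m b b' ->
  count (cut_in_class (Theta (k + m)) k x0 a b) (S (k + m))
  = count (cut_in_class (Theta (k + m)) k x0 a' b') (S (k + m)).
Proof.
move=> aS a'S bS b'S Ra Rb; have RC n := H_family_congr n HF.
have Ra' := congr_sym (RC k) aS a'S Ra; have Rb' := congr_sym (RC m) bS b'S Rb.
by apply/eqP; rewrite eqn_leq !count_cut_in_class_le.
Qed.
End CutStandardizations.

Section HopfEmbedding.
Variables (K : fieldType) (Theta : nat -> rel (seq nat)).
Hypothesis HF : H_family Theta.
Local Open Scope ring_scope.

Let RC n := H_family_congr n HF.

Lemma big_seq_only (I : eqType) (r : seq I) i (F : I -> K) : uniq r -> i \in r ->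
  {in r, forall j, j != i -> F j = 0} -> \sum_(j <- r) F j = F i.
Proof.
move=> ur ir F0; rewrite (bigD1_seq i) //= big1_seq ?addr0 // => j /andP[ji jr].
exact: F0.
Qed.

Lemma cmap_out n x y : y \notin S n -> cmap K Theta n x y = 0.
Proof. by rewrite /cmap => /negbTE ->. Qed.

Lemma cmap_minE n x y : is_min n (Theta n) x -> inZ Theta (size y) y ->
  cmap K Theta n x y = (x == y)%:R.
Proof.
move=> x_min /inZP y_min; have [xS _] := x_min.
have [yS|yNS] := boolP (y \in S n); last first.
  by rewrite cmap_out //; case: eqP yNS => // <-; rewrite xS.
rewrite /cmap yS (S_size yS) in y_min *.
have [<-|ne] := eqVneq x y; first by rewrite (congr_refl (RC n)).
by case Rxy: (Theta n x y) => //; case/negP: ne; rewrite (class_min_unique (RC n) x_min y_min Rxy).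
Qed.

Lemma sum_cmap_min n (f : seq nat -> K) x y :
  {in S n, forall x', ~~ inZ Theta n x' -> f x' = 0} ->
  is_min n (Theta n) x -> y \in S n -> Theta n x y ->
  \sum_(x' <- S n) f x' * cmap K Theta n x' y = f x.
Proof.
move=> f0 x_min yS Rxy; have [xS _] := x_min.
rewrite (big_seq_only (uniq_S n) xS) => [|x' x'S ne].
  by rewrite /cmap yS Rxy mulr1.
have [/inZP x'_min|] := boolP (inZ Theta n x'); last by move/(f0 _ x'S) ->; rewrite mul0r.
rewrite /cmap yS; case Rx'y: (Theta n x' y); rewrite ?mulr0 //.
have Rx'x := congr_trans (RC n) x'S yS xS Rx'y (congr_sym (RC n) xS yS Rxy).
by case/negP: ne; rewrite (class_min_unique (RC n) x'_min x_min Rx'x).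
Qed.

Lemma cmap_free (s : seq (seq nat)) (a : seq nat -> K) :
  uniq s -> all (fun x => inZ Theta (size x) x) s ->
  (forall y, \sum_(x <- s) a x * cmap K Theta (size x) x y = 0) ->
  forall x, x \in s -> a x = 0.
Proof.
move=> us /allP s_min a0 x xs; rewrite -[a x]mulr1 -(a0 x) (big_seq_only us xs).
  by rewrite cmap_minE ?eqxx ?s_min //; apply/inZP; apply: s_min.
move=> x' x's ne; rewrite cmap_minE ?s_min //; last by apply/inZP; apply: s_min.
by rewrite (negbTE ne) mulr0.
Qed.

Lemma cmap_unit y : cmap K Theta 0 [::] y = (y == [::])%:R.
Proof.
rewrite /cmap /S /= in_cons in_nil orbF.
by case: eqVneq => [->|] //=; rewrite (congr_refl (RC 0)).
Qed.

Lemma prodS_E p q u v y : u \in S p -> v \in S q ->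
  prodS K u v y = ((y \in S (p + q)) && (u == low p y) && (v == high p y))%:R.
Proof.
move=> uS vS; rewrite /prodS (S_size uS) (S_size vS).
have [yS|] //= := boolP (y \in S (p + q)); rewrite (xbarE yS).
suff -> : (cross (low p y) (high p y) == cross u v) = (u == low p y) && (v == high p y) by [].
apply/idP/andP => [/eqP E|[/eqP-> /eqP->]] //.
by have [-> ->] := cross_inj (S_size (low_S yS)) (S_size uS) E; rewrite !eqxx.
Qed.

Lemma prodS_linE p q (f g : seq nat -> K) y : y \in S (p + q) ->
  prodS_lin K p q f g y = f (low p y) * g (high p y).
Proof.
move=> yS; rewrite /prodS_lin (big_seq_only (uniq_S p) (low_S yS)) => [|u uS ne].
  rewrite (big_seq_only (uniq_S q) (high_S yS)) => [|v vS ne].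
    by rewrite (prodS_E _ (low_S yS) (high_S yS)) yS !eqxx mulr1.
  by rewrite (prodS_E _ (low_S yS) vS) (negbTE ne) andbF mulr0.
by rewrite big1_seq // => v /andP[_ vS]; rewrite (prodS_E _ uS vS) (negbTE ne) andbF mulr0.
Qed.

Lemma cmap_mult p q u v : inZ Theta p u -> inZ Theta q v ->
  cmap_lin K Theta (p + q) (prodZ K Theta u v)
  = prodS_lin K p q (cmap K Theta p u) (cmap K Theta q v).
Proof.
move=> /inZP u_min /inZP v_min; have [[uS _] [vS _]] := (u_min, v_min).
apply: functional_extensionality => y; rewrite /cmap_lin.
have [yS|yNS] := boolP (y \in S (p + q)); last first.
  rewrite big1_seq => [|x _]; last by rewrite cmap_out ?mulr0.
  rewrite /prodS_lin big1_seq // => u' /andP[_ u'S]; rewrite big1_seq // => v' /andP[_ v'S].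
  by rewrite (prodS_E _ u'S v'S) (negbTE yNS) /= mulr0.
rewrite prodS_linE //; have [x x_min Rxy] := exists_class_min (RC _) yS.
rewrite /prodZ (S_size uS) (S_size vS).
rewrite (sum_cmap_min _ x_min yS Rxy) => [|x' _ /negbTE ->] //.
rewrite /cmap (low_S yS) (high_S yS) /= -natrM mulnb.
have xZ : inZ Theta (p + q) x by apply/inZP.
by rewrite xZ (xbar_minE HF x_min u_min v_min yS Rxy).
Qed.

Lemma coprodSE y a b :
  coprodS K y (a, b) = ((st (take (size a) y) == a) && (st (drop (size a) y) == b))%:R.
Proof.
rewrite /coprodS; case: (leqP (size a) (size y)) => [le_ay|lt_ya].
  rewrite (bigD1 (Ordinal (le_ay : (size a < (size y).+1)%N))) //= big1 ?addr0.
    by rewrite xpair_eqE ![_ == st _]eq_sym.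
  move=> i ne; rewrite xpair_eqE; case: eqP => //= Ea.
  have lt_iy := ltn_ord i; case/eqP: ne; apply: val_inj => /=.
  by rewrite Ea size_map size_takel.
rewrite take_oversize ?(ltnW lt_ya) // [st y == a](_ : _ = false) ?big1 // => [i _|].
  rewrite xpair_eqE; case: eqP => //= Ea; have := ltn_ord i; rewrite ltnS => le_iy.
  by move: lt_ya; rewrite Ea size_map size_takel // ltnNge le_iy.
by apply: contraTF lt_ya => /eqP <-; rewrite size_map ltnn.
Qed.

Lemma sumr_nat_count (T : eqType) (r : seq T) (P : pred T) :
  \sum_(i <- r) (P i)%:R = (count P r)%:R :> K.
Proof. by rewrite -sum1_count natr_sum [RHS]big_mkcond; apply: eq_bigr => i _; case: (P i). Qed.

Lemma coprodS_lin_cmapE n x a b : coprodS_lin K n (cmap K Theta n x) (a, b) =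
  (count (cut_in_class (Theta n) (size a) x a b) (S n))%:R.
Proof.
rewrite /coprodS_lin -sumr_nat_count; apply: eq_big_seq => y yS.
by rewrite coprodSE /cmap yS -natrM mulnb.
Qed.

Lemma cut_in_class_S n R x a b y : y \in S n -> cut_in_class R (size a) x a b y ->
  [/\ size a <= n, a \in S (size a) & b \in S (n - size a)]%N.
Proof.
move=> yS /and3P[_ /eqP Ea /eqP Eb]; have uy := S_uniq yS.
have le_an : (size a <= n)%N.
  have := congr1 size Ea; rewrite size_map size_take (S_size yS).
  by case: ltnP => [/ltnW|_ ->].
have size_take_a : size (take (size a) y) = size a by rewrite size_takel ?(S_size yS).
split=> //; first by rewrite -{1}Ea -{2}size_take_a st_S ?take_uniq.
by rewrite -Eb -(S_size yS) -size_drop st_S ?drop_uniq.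
Qed.

Lemma cc_lin_sizeE n h a b : cc_lin K Theta n h (a, b) =
  if (size a <= n)%N then
    \sum_(u <- S (size a)) \sum_(w <- S (n - size a))
       h (u, w) * cmap K Theta (size a) u a * cmap K Theta (n - size a) w b
  else 0.
Proof.
have cmapNS p u : size a != p -> cmap K Theta p u a = 0.
  by move=> ne; rewrite cmap_out //; apply: contra ne => /S_size ->.
rewrite /cc_lin; case: leqP => [le_an|lt_na]; last first.
  rewrite big1 // => i _; rewrite big1_seq // => u _; rewrite big1_seq // => w _.
  by rewrite cmapNS ?mulr0 ?mul0r //; apply: contraTneq lt_na => ->; rewrite -leqNgt -ltnS.
rewrite (bigD1 (Ordinal (le_an : (size a < n.+1)%N))) //= [X in _ + X]big1 ?addr0 // => i ne.
rewrite big1_seq // => u _; rewrite big1_seq // => w _; rewrite cmapNS ?mulr0 ?mul0r //.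
by apply: contra ne => /eqP Ei; apply/eqP/val_inj.
Qed.

Lemma sum_cmap2_min k m (h : seq nat * seq nat -> K) a b ua wb :
  (forall u w, u \in S k -> w \in S m -> ~~ (inZ Theta k u && inZ Theta m w) -> h (u, w) = 0) ->
  is_min k (Theta k) ua -> is_min m (Theta m) wb -> a \in S k -> b \in S m ->
  Theta k ua a -> Theta m wb b ->
  \sum_(u <- S k) \sum_(w <- S m) h (u, w) * cmap K Theta k u a * cmap K Theta m w b
  = h (ua, wb).
Proof.
move=> h0 ua_min wb_min aS bS Ra Rb; have [uaS _] := ua_min.
transitivity (\sum_(u <- S k)
    (\sum_(w <- S m) h (u, w) * cmap K Theta m w b) * cmap K Theta k u a).
  by apply: eq_bigr => u _; rewrite mulr_suml; apply: eq_bigr => w _; rewrite mulrAC.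
rewrite (sum_cmap_min _ ua_min aS Ra) => [|u uS uN].
  by rewrite (sum_cmap_min _ wb_min bS Rb) // => w wS /negbTE wN; rewrite h0 // wN andbF.
by rewrite big1_seq // => w /andP[_ wS]; rewrite h0 ?mul0r // (negbTE uN).
Qed.

Lemma cmap_comult n x : inZ Theta n x ->
  coprodS_lin K n (cmap K Theta n x) = cc_lin K Theta n (coprodZ K Theta n x).
Proof.
move=> /inZP x_min; have [xS _] := x_min.
apply: functional_extensionality => -[a b]; rewrite coprodS_lin_cmapE cc_lin_sizeE.
have [/and3P[le_an aS bS]|not_ab] :=
  boolP [&& size a <= n, a \in S (size a) & b \in S (n - size a)]%N; last first.
  rewrite (@eq_in_count _ _ pred0) ?count_pred0 => [|y yS]; last first.
    by apply: contraNF not_ab => /(cut_in_class_S yS)[-> -> ->].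
  case: ifP not_ab => //= le_an /nandP[aNS|bNS];
  rewrite big1_seq // => u _; rewrite big1_seq // => w _.
    by rewrite (cmap_out _ aNS) mulr0 mul0r.
  by rewrite (cmap_out _ bNS) mulr0.
have [ua ua_min Rua] := exists_class_min (RC _) aS.
have [wb wb_min Rwb] := exists_class_min (RC _) bS.
rewrite le_an (sum_cmap2_min _ ua_min wb_min aS bS Rua Rwb) => [|u w uS wS uwN]; last first.
  by rewrite /coprodZ /rr /= (S_size uS) (S_size wS) (negbTE uwN).
have [[uaS _] [wbS _]] := (ua_min, wb_min).
have [uaZ wbZ] : inZ Theta (size a) ua /\ inZ Theta (n - size a) wb by split; apply/inZP.
rewrite /coprodZ /rr /= (S_size uaS) (S_size wbS) uaZ wbZ coprodS_lin_cmapE (S_size uaS).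
congr (_%:R); have [m Em] : exists m, n = (size a + m)%N by exists (n - size a)%N; rewrite subnKC.
subst n; rewrite addKn in bS wbS Rwb *.
apply: (count_cut_in_class_congr HF xS aS uaS bS wbS).
  exact: (congr_sym (RC _) uaS aS Rua).
exact: (congr_sym (RC _) wbS bS Rwb).
Qed.
End HopfEmbedding.

Local Open Scope ring_scope.

Theorem corollary1p4 (K : fieldType) (Theta : nat -> rel (seq nat)) :
  H_family Theta ->
  [/\ (* c is injective (on K[Z_infty] = span of the Z_n) *)
      (forall (s : seq (seq nat)) (a : seq nat -> K),
         uniq s -> all (fun x => inZ Theta (size x) x) s ->
         (forall y, \sum_(x <- s) a x * cmap K Theta (size x) x y = 0) ->
         forall x, x \in s -> a x = 0),
      (* c preserves the unit *)
      (forall y, cmap K Theta 0 [::] y = (y == [::])%:R),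
      (* c is multiplicative: c (u .Z v) = c u .S c v *)
      (forall p q u v, inZ Theta p u -> inZ Theta q v ->
         cmap_lin K Theta (p + q) (prodZ K Theta u v)
         = prodS_lin K p q (cmap K Theta p u) (cmap K Theta q v)) &
      (* c is comultiplicative: Delta_S (c x) = (c (x) c) (Delta_Z x) *)
      (forall n x, inZ Theta n x ->
         coprodS_lin K n (cmap K Theta n x)
         = cc_lin K Theta n (coprodZ K Theta n x))].
Proof.
move=> HF; split.
- exact: cmap_free HF.
- exact: cmap_unit HF.
- exact: cmap_mult HF.
- exact: cmap_comult HF.
Qed.
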